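(* Let $(\alpha_k)_{k\ge1}$ be a uniformly bounded sequence of positive reals, $\gamma_k:=\sum_{j=1}^k\frac1{\alpha_j}$ ($\gamma_0:=0$), let $\kappa>0$ and $\tau>0$ be constants, and for $\delta\ge0$, $k\ge1$ define $$e_k^n:=\delta^2\sum_{i=1}^k\Big(\frac{1}{\alpha_i^2}+\gamma_{i-1}^2\Big),\qquad e_k^r:=1+\sum_{i=1}^k\alpha_i^{-1}\gamma_i^{-\kappa}.$$ Define $k(\delta):=0$ if $e_1^n>\tau e_1^r$, and otherwise $k(\delta):=\max\{k\in\mathbb{N}:\ e_i^n\le\tau e_i^r\ \text{for all } i\le k\}$. Then for every $\delta>0$, $k(\delta)$ is well-defined and unique (in particular the maximum exists and is finite), and $k(\delta)\to\infty$ as $\delta\to0$.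
   Context: In the paper $\kappa$ is the exponent from an active set condition on a solution of the underlying optimization problem; for this statement only $\kappa>0$ matters. $\mathbb{N}=\{1,2,\dots\}$. *)

From Stdlib Require Import Reals Lra Lia.
Open Scope R_scope.

Fixpoint sum1 (f : nat -> R) (k : nat) : R :=
  match k with
  | O => 0
  | S k' => sum1 f k' + f (S k')
  end.

Definition gam (alpha : nat -> R) (k : nat) : R := sum1 (fun j => / alpha j) k.

Definition en (alpha : nat -> R) (delta : R) (k : nat) : R :=
  delta ^ 2 * sum1 (fun i => / (alpha i ^ 2) + (gam alpha (i - 1)) ^ 2) k.

Definition er (alpha : nat -> R) (kappa : R) (k : nat) : R :=
  1 + sum1 (fun i => / alpha i * Rpower (gam alpha i) (- kappa)) k.

Definition good (alpha : nat -> R) (kappa tau delta : R) (k : nat) : Prop :=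
  (1 <= k)%nat /\
  forall i : nat, (1 <= i <= k)%nat -> en alpha delta i <= tau * er alpha kappa i.

Definition is_kdelta (alpha : nat -> R) (kappa tau delta : R) (k : nat) : Prop :=
  (en alpha delta 1 > tau * er alpha kappa 1 /\ k = 0%nat)
  \/ (en alpha delta 1 <= tau * er alpha kappa 1 /\
      good alpha kappa tau delta k /\
      forall k' : nat, good alpha kappa tau delta k' -> (k' <= k)%nat).

(** Each of the two defining inequalities compares a sum growing quadratically
    in [gam k] (the noise term [en]) with one growing at most linearly in
    [gam k] (the regularity term [er], since [gam] is increasing and so
    [gam i ^ (-kappa) <= gam 1 ^ (-kappa)]).  Because the [alpha k] are bounded,
    [gam k >= k / M] is unbounded, so for every [delta > 0] the inequality fails
    at some index and the first failure determines [k(delta)].  Conversely, for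
    a fixed horizon [N] the finitely many inequalities up to [N] hold once
    [delta ^ 2] is small, because [er >= 1]; hence [k(delta) >= N]. *)

From Stdlib Require Import Reals Lra Lia Classical Wf_nat.
Open Scope R_scope.

Lemma is_kdelta_unique alpha kappa tau delta k1 k2 :
  is_kdelta alpha kappa tau delta k1 -> is_kdelta alpha kappa tau delta k2 ->
  k1 = k2.
Proof.
  intros [[H1 ->] | [H1 [Hg1 Hmax1]]] [[H2 ->] | [H2 [Hg2 Hmax2]]];
    try reflexivity; try lra.
  apply Nat.le_antisymm; [apply Hmax2 | apply Hmax1]; assumption.
Qed.

Lemma is_kdelta_exists alpha kappa tau delta :
  (exists m, (1 <= m)%nat /\ en alpha delta m > tau * er alpha kappa m) ->
  exists k, is_kdelta alpha kappa tau delta k.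
Proof.
  intros Hbad.
  destruct (Rgt_dec (en alpha delta 1) (tau * er alpha kappa 1)) as [H1 | H1].
  { exists 0%nat; left; auto. }
  apply Rnot_gt_le in H1.
  set (bad m := (1 <= m)%nat /\ en alpha delta m > tau * er alpha kappa m).
  destruct (dec_inh_nat_subset_has_unique_least_element bad
              (fun n => classic (bad n)) Hbad) as [m [[[Hm1 Hm] Hleast] _]].
  assert (Hm2 : (2 <= m)%nat).
  { destruct (Nat.eq_dec m 1) as [-> | ]; [lra | lia]. }
  exists (m - 1)%nat; right; repeat split; [exact H1 | lia | |].
  - intros i Hi; apply Rnot_gt_le; intros Hi_bad.
    specialize (Hleast i (conj (proj1 Hi) Hi_bad)); lia.
  - intros k' [_ Hk']; apply Nat.nlt_ge; intros Hlt.
    specialize (Hk' m ltac:(lia)); lra.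
Qed.

Lemma is_kdelta_ge alpha kappa tau delta N k :
  (forall i, (1 <= i <= N)%nat -> en alpha delta i <= tau * er alpha kappa i) ->
  is_kdelta alpha kappa tau delta k -> (N <= k)%nat.
Proof.
  intros Hgood [[H1 _] | [_ [_ Hmax]]].
  - destruct N as [|N]; [lia|].
    specialize (Hgood 1%nat ltac:(lia)); lra.
  - destruct N as [|N]; [lia|].
    apply Hmax; split; [lia | exact Hgood].
Qed.

Lemma sum1_nonneg (f : nat -> R) k :
  (forall i, (1 <= i)%nat -> 0 <= f i) -> 0 <= sum1 f k.
Proof.
  intros Hf; induction k as [|k IH]; simpl; [lra|].
  specialize (Hf (S k) ltac:(lia)); lra.
Qed.

Lemma sum1_le (f : nat -> R) i j :
  (forall i, (1 <= i)%nat -> 0 <= f i) -> (i <= j)%nat -> sum1 f i <= sum1 f j.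
Proof.
  intros Hf Hij; induction Hij as [|j _ IH]; simpl; [lra|].
  specialize (Hf (S j) ltac:(lia)); lra.
Qed.

Section Tradeoff.

Variables (alpha : nat -> R) (kappa tau M : R).
Hypothesis alpha_pos : forall k, (1 <= k)%nat -> 0 < alpha k.
Hypothesis alpha_le_M : forall k, (1 <= k)%nat -> alpha k <= M.
Hypothesis kappa_ge0 : 0 <= kappa.
Hypothesis tau_pos : 0 < tau.

Let inv_alpha_pos i : (1 <= i)%nat -> 0 < / alpha i.
Proof. intros Hi; apply Rinv_0_lt_compat, alpha_pos, Hi. Qed.

Let M_pos : 0 < M.
Proof. specialize (alpha_pos 1 (le_n 1)); specialize (alpha_le_M 1 (le_n 1)); lra. Qed.

Lemma gam_S k : gam alpha (S k) = gam alpha k + / alpha (S k).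
Proof. reflexivity. Qed.

Lemma gam_le i j : (i <= j)%nat -> gam alpha i <= gam alpha j.
Proof. apply sum1_le; intros; left; auto. Qed.

Lemma gam1_pos : 0 < gam alpha 1.
Proof. rewrite gam_S; unfold gam; simpl; specialize (inv_alpha_pos 1 (le_n 1)); lra. Qed.

Lemma gam_ge k : INR k / M <= gam alpha k.
Proof.
  induction k as [|k IH]; [unfold gam; simpl; lra|].
  rewrite gam_S, S_INR; unfold Rdiv in *.
  assert (/ M <= / alpha (S k)) by (apply Rinv_le_contravar; auto with arith).
  pose proof M_pos.
  lra.
Qed.

Lemma gam_unbounded X : exists n, (1 <= n)%nat /\ X <= gam alpha n.
Proof.
  destruct (INR_unbounded (X * M)) as [n Hn].
  exists (S n); split; [lia|].
  apply Rle_trans with (INR (S n) / M); [|apply gam_ge].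
  apply Rmult_le_reg_r with M; [exact M_pos|].
  unfold Rdiv; rewrite Rmult_assoc, Rinv_l, S_INR by lra; lra.
Qed.

Let en_summand_nonneg i :
  (1 <= i)%nat -> 0 <= / (alpha i ^ 2) + gam alpha (i - 1) ^ 2.
Proof.
  intros Hi; rewrite <- pow_inv.
  specialize (inv_alpha_pos i Hi); nra.
Qed.

Let er_summand_nonneg i :
  (1 <= i)%nat -> 0 <= / alpha i * Rpower (gam alpha i) (- kappa).
Proof.
  intros Hi; specialize (inv_alpha_pos i Hi).
  pose proof (exp_pos (- kappa * ln (gam alpha i))); unfold Rpower; nra.
Qed.

Lemma er_ge1 k : 1 <= er alpha kappa k.
Proof. unfold er; pose proof (sum1_nonneg _ k er_summand_nonneg); lra. Qed.

Lemma er_le_linear k :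
  er alpha kappa k <= 1 + Rpower (gam alpha 1) (- kappa) * gam alpha k.
Proof.
  set (c := Rpower (gam alpha 1) (- kappa)).
  induction k as [|k IH]; [unfold er, gam; simpl; lra|].
  assert (Hdecr : Rpower (gam alpha (S k)) (- kappa) <= c).
  { unfold c; rewrite !Rpower_Ropp.
    apply Rinv_le_contravar; [apply exp_pos|].
    apply Rle_Rpower_l; [exact kappa_ge0|].
    split; [exact gam1_pos | apply gam_le; lia]. }
  assert (/ alpha (S k) * Rpower (gam alpha (S k)) (- kappa) <= / alpha (S k) * c)
    by (apply Rmult_le_compat_l; [left; apply inv_alpha_pos; lia | exact Hdecr]).
  unfold er in *; simpl sum1.
  rewrite (gam_S k) at 2; lra.
Qed.

Lemma en_ge_sq delta k :
  (1 <= k)%nat -> delta ^ 2 * gam alpha k ^ 2 / 2 <= en alpha delta k.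
Proof.
  intros Hk; destruct k as [|k]; [lia|].
  unfold en; cbn [sum1]; rewrite gam_S, <- pow_inv.
  replace (S k - 1)%nat with k by lia.
  pose proof (sum1_nonneg _ k en_summand_nonneg).
  set (x := gam alpha k); set (y := / alpha (S k)).
  assert ((x + y) ^ 2 / 2 <= x ^ 2 + y ^ 2) by (pose proof (pow2_ge_0 (x - y)); nra).
  pose proof (pow2_ge_0 delta); nra.
Qed.

Lemma exists_violated_index delta :
  0 < delta ->
  exists m, (1 <= m)%nat /\ en alpha delta m > tau * er alpha kappa m.
Proof.
  intros Hd.
  set (c := Rpower (gam alpha 1) (- kappa)).
  assert (Hc : 0 < c) by apply exp_pos.
  assert (Hd2 : 0 < delta ^ 2) by (apply pow_lt; exact Hd).
  set (X := 2 * tau * (1 + c) / delta ^ 2 + 1).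
  assert (HX : delta ^ 2 * X = 2 * tau * (1 + c) + delta ^ 2) by (unfold X; field; lra).
  assert (HX1 : 1 <= X).
  { assert (0 <= 2 * tau * (1 + c) / delta ^ 2)
      by (apply Rmult_le_pos; [nra | left; apply Rinv_0_lt_compat, Hd2]).
    unfold X; lra. }
  destruct (gam_unbounded X) as [m [Hm HXg]].
  exists m; split; [exact Hm|].
  pose proof (en_ge_sq delta m Hm) as Hen.
  pose proof (er_le_linear m) as Her; fold c in Her.
  set (g := gam alpha m) in *.
  (* [delta^2 g^2 / 2 >= delta^2 g X / 2 = g (tau (1 + c) + delta^2 / 2)] *)
  assert (delta ^ 2 * g * X <= delta ^ 2 * g * g) by (apply Rmult_le_compat_l; nra).
  nra.
Qed.

Lemma small_delta_inequalities N :
  exists d0, 0 < d0 /\ forall delta, 0 < delta < d0 ->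
    forall i, (i <= N)%nat -> en alpha delta i <= tau * er alpha kappa i.
Proof.
  set (S := sum1 (fun i => / (alpha i ^ 2) + gam alpha (i - 1) ^ 2) N).
  assert (HS : 0 <= S) by (apply sum1_nonneg, en_summand_nonneg).
  assert (Hq : 0 < tau / (S + 1)) by (apply Rdiv_lt_0_compat; lra).
  exists (sqrt (tau / (S + 1))); split; [apply sqrt_lt_R0, Hq|].
  intros delta [Hd Hlt] i Hi.
  assert (Hd2 : delta ^ 2 * (S + 1) < tau).
  { assert (delta ^ 2 < tau / (S + 1)).
    { rewrite <- (Rsqr_sqrt (tau / (S + 1))) by lra.
      rewrite <- Rsqr_pow2; apply Rsqr_incrst_1; lra. }
    apply Rmult_lt_compat_r with (r := S + 1) in H; [|lra].
    unfold Rdiv in H; rewrite Rmult_assoc, Rinv_l in H by lra; lra. }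
  assert (sum1 (fun i => / (alpha i ^ 2) + gam alpha (i - 1) ^ 2) i <= S)
    by (apply sum1_le; [exact en_summand_nonneg | exact Hi]).
  pose proof (sum1_nonneg _ i en_summand_nonneg).
  pose proof (er_ge1 i); pose proof (pow2_ge_0 delta).
  unfold en; nra.
Qed.

End Tradeoff.

Theorem mainTheorem2 (alpha : nat -> R) (kappa tau : R)
  (Hpos : forall k : nat, (1 <= k)%nat -> 0 < alpha k)
  (Hbnd : exists M : R, forall k : nat, (1 <= k)%nat -> alpha k <= M)
  (Hkappa : 0 < kappa) (Htau : 0 < tau) :
  (forall delta : R, 0 < delta -> exists! k : nat, is_kdelta alpha kappa tau delta k)
  /\
  (forall N : nat, exists d0 : R, 0 < d0 /\
     forall delta : R, 0 < delta < d0 ->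
       forall k : nat, is_kdelta alpha kappa tau delta k -> (N <= k)%nat).
Proof.
  destruct Hbnd as [M HM].
  assert (Hkappa0 : 0 <= kappa) by lra.
  split.
  - intros delta Hd.
    destruct (is_kdelta_exists alpha kappa tau delta
                (exists_violated_index alpha kappa tau M Hpos HM Hkappa0 Htau delta Hd))
      as [k Hk].
    exists k; split; [exact Hk|].
    intros k'; apply is_kdelta_unique, Hk.
  - intros N.
    destruct (small_delta_inequalities alpha kappa tau Hpos Htau N)
      as [d0 [Hd0 Hsmall]].
    exists d0; split; [exact Hd0|].
    intros delta Hd k Hk.
    apply (is_kdelta_ge alpha kappa tau delta N k); [|exact Hk].
    intros i Hi; apply Hsmall; [exact Hd | apply Hi].
Qed.
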